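(* Let $P$ be a finite graded poset with $\hat0$ and let $\lambda$ be an ER-labeling of $P$ satisfying the rank two switching property and such that in each interval of $P$ distinct ascent-free maximal chains have distinct words of labels. Then $\lambda$ satisfies the rank two switching property, the braid relation and the cancellative property.
   Context: An E-labeling is a map $\lambda$ from the cover relations of $P$ to a poset $\Lambda$. The word of labels of a saturated chain $x_0\lessdot\cdots\lessdot x_\ell$ is $\lambda(x_0\lessdot x_1)\cdots\lambda(x_{\ell-1}\lessdot x_\ell)$; the chain is increasing if the word is strictly increasing, ascent-free if no $i$ has $\lambda(x_{i-1}\lessdot x_i)<\lambda(x_i\lessdot x_{i+1})$. ER-labeling: every closed interval has exactly one increasing maximal chain. Rank two switching property: for every saturated chain $\hat0=x_0\lessdot\cdots\lessdot x_k$ and every $i$ with $\lambda(x_{i-1}\lessdot x_i)<\lambda(x_i\lessdot x_{i+1})$ there is a unique $x_i'$ with $x_{i-1}\lessdot x_i'\lessdot x_{i+1}$, $\lambda(x_{i-1}\lessdot x_i')=\lambda(x_i\lessdot x_{i+1})$, $\lambda(x_i'\lessdot x_{i+1})=\lambda(x_{i-1}\lessdot x_i)$. Quadratic exchange: for a maximal chain $\mathbf c$ of an interval with an ascent at position $i$, $U_i(\mathbf c)$ replaces $x_i$ by $x_i'$; otherwise $U_i(\mathbf c)=\mathbf c$. For maximal chains of an interval, $\mathbf c_1\sim_\lambda\mathbf c_2$ means they are connected by a sequence of quadratic exchanges (forwards or backwards) within that interval. Braid relation: whenever a maximal chain $\mathbf c$ of an interval has strictly increasing labels at three consecutive positions $i,i+1,i+2$,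 $U_iU_{i+1}U_i(\mathbf c)=U_{i+1}U_iU_{i+1}(\mathbf c)$. Cancellative property: for all $z<x<y$, every maximal chain $\mathbf c$ of $[z,x]$ and maximal chains $\mathbf c_1,\mathbf c_2$ of $[x,y]$, $\mathbf c\cup\mathbf c_1\sim_\lambda\mathbf c\cup\mathbf c_2$ implies $\mathbf c_1\sim_\lambda\mathbf c_2$. *)

From mathcomp Require Import all_boot all_order.
From Stdlib Require Import Relations.
Set Implicit Arguments. Unset Strict Implicit. Unset Printing Implicit Defensive.
Import Order.Theory.
Local Open Scope order_scope.

Section Labelings.
Context {d : Order.disp_t} {P : finPOrderType d}
        {dL : Order.disp_t} {L : porderType dL}.

Definition covers (x y : P) : bool :=
  (x < y) && [forall z : P, ~~ ((x < z) && (z < y))].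

Definition graded : Prop :=
  exists rk : P -> nat, forall x y, covers x y -> rk y = (rk x).+1.

Variable lam : P -> P -> L.   (* the E-labeling; only its values on covers matter *)

(* a chain is given by the full sequence [:: x_0; x_1; ...; x_l] of its elements *)
Definition is_maxchain (x y : P) (c : seq P) : bool :=
  if c is a :: s then [&& a == x, path covers a s & last a s == y] else false.

Definition labels (c : seq P) : seq L :=
  if c is a :: s then pairmap lam a s else [::].

Definition increasing (w : seq L) : bool := sorted (fun u v => u < v) w.

Definition ascent_free (w : seq L) : bool :=
  if w is u :: s then all id (pairmap (fun a b => ~~ (a < b)) u s) else true.

Definition ER_labeling : Prop :=
  forall x y : P, x <= y ->
    exists! c, is_maxchain x y c /\ increasing (labels c).

Definition switching (bot : P) : Prop :=
  forall s : seq P, path covers bot s ->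
  forall i, 0 < i -> i < size s ->
    let x := nth bot (bot :: s) in
    lam (x i.-1) (x i) < lam (x i) (x i.+1) ->
    exists! y, [/\ covers (x i.-1) y, covers y (x i.+1),
                   lam (x i.-1) y = lam (x i) (x i.+1)
                 & lam y (x i.+1) = lam (x i.-1) (x i)].

Definition U (i : nat) (c : seq P) : seq P :=
  if c is a :: _ then
    let x := nth a c in
    if [&& 0 < i, i.+1 < size c & lam (x i.-1) (x i) < lam (x i) (x i.+1)] then
      match [pick y | [&& covers (x i.-1) y, covers y (x i.+1),
                          lam (x i.-1) y == lam (x i) (x i.+1)
                        & lam y (x i.+1) == lam (x i.-1) (x i)]] with
      | Some y => set_nth a c i y
      | None => c
      end
    else c
  else c.

Definition lam_equiv (x y : P) : relation (seq P) :=
  clos_refl_sym_trans (seq P)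
    (fun c1 c2 => [/\ is_maxchain x y c1, is_maxchain x y c2 & exists i, U i c1 = c2]).

Definition braid_relation : Prop :=
  forall (x y : P) (c : seq P), is_maxchain x y c ->
  forall i, 0 < i -> i.+3 <= size c ->
    let z := nth x c in
    lam (z i.-1) (z i) < lam (z i) (z i.+1) ->
    lam (z i) (z i.+1) < lam (z i.+1) (z i.+2) ->
    U i (U i.+1 (U i c)) = U i.+1 (U i (U i.+1 c)).

Definition cancellative : Prop :=
  forall z x y : P, z < x -> x < y ->
  forall c c1 c2 : seq P,
    is_maxchain z x c -> is_maxchain x y c1 -> is_maxchain x y c2 ->
    lam_equiv z y (c ++ behead c1) (c ++ behead c2) ->
    lam_equiv x y c1 c2.

Definition distinct_ascent_free_words : Prop :=
  forall (x y : P) (c1 c2 : seq P),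
    is_maxchain x y c1 -> is_maxchain x y c2 ->
    ascent_free (labels c1) -> ascent_free (labels c2) ->
    labels c1 = labels c2 -> c1 = c2.

End Labelings.

From mathcomp Require Import all_boot all_order zify.
From Stdlib Require Import Relations.
Set Implicit Arguments. Unset Strict Implicit. Unset Printing Implicit Defensive.
Import Order.Theory.
Local Open Scope order_scope.

(* Quadratic exchanges at ascents strictly decrease a weight of the label word, and two
   exchanges applied to the same chain can always be rejoined: disjoint ones commute, and
   overlapping ones close up into the rank-three hexagon, whose two sides coincide because
   both end in the same ascent-free word.  By Newman's lemma every saturated chain thus has
   a unique ascent-free normal form, shared by all chains equivalent to it; the braid
   relation is the hexagon itself.  For cancellation, the normal form of [c ++ c1] is
   obtained by bubbling the labels of [c], from right to left, into the normal form of [c1];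
   each bubbling step is injective by the uniqueness of increasing chains in rank two, so
   [c1] and [c2] have the same normal form. *)

Local Arguments rt_step {A R x y}.
Local Arguments rt_refl {A R x}.
Local Arguments rt_trans {A R x y z}.
Local Arguments rst_step {A R x y}.
Local Arguments rst_refl {A R x}.
Local Arguments rst_sym {A R x y}.
Local Arguments rst_trans {A R x y z}.
Local Arguments clos_rt_rt1n {A R x y}.
Local Arguments clos_rt1n_rt {A R x y}.

Section NormalForms.

Variables (T : Type) (R : relation T).
Local Notation reach := (clos_refl_trans T R).
Variables (inv : T -> Prop) (normal : pred T) (weight : T -> nat).
Hypothesis R_inv : forall a b, R a b -> inv a -> inv b.
Hypothesis R_weight : forall a b, R a b -> (weight b < weight a)%N.
Hypothesis normal_irreducible : forall a b, normal a -> ~ R a b.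
Hypothesis not_normal_reducible : forall a, inv a -> ~~ normal a -> exists b, R a b.
Hypothesis R_local_confluent :
  forall a b c, R a b -> R a c -> exists2 d, reach b d & reach c d.

Lemma reach_inv a b : reach a b -> inv a -> inv b.
Proof. by elim=> [x y /R_inv | // | x y z _ IH1 _ IH2 /IH1]. Qed.

Lemma reachP a b : reach a b -> b = a \/ exists2 c, R a c & reach c b.
Proof.
by case/clos_rt_rt1n=> [|c ? ac /clos_rt1n_rt cb]; [left | right; exists c].
Qed.

Lemma reach_normal a b : normal a -> reach a b -> b = a.
Proof. by move=> na /reachP[// | [c /(normal_irreducible na)]]. Qed.

Lemma reach_normal_exists a : inv a -> exists2 f, reach a f & normal f.
Proof.
have [n] := ubnP (weight a); elim: n a => // n IH a /ltnSE wa inv_a.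
have [na | nna] := boolP (normal a); first by exists a => //; exact: rt_refl.
have [b ab] := not_normal_reducible inv_a nna.
have [|f bf nf] := IH b _ (R_inv ab inv_a); first exact: leq_trans (R_weight ab) wa.
by exists f => //; exact: rt_trans (rt_step ab) bf.
Qed.

Theorem reach_normal_unique a f g :
  inv a -> reach a f -> normal f -> reach a g -> normal g -> f = g.
Proof.
have [n] := ubnP (weight a); elim: n a f g => // n IH a f g /ltnSE wa inv_a af nf ag ng.
case: (reachP af) => [fa | [b ab bf]]; first by rewrite fa in nf *; rewrite (reach_normal nf ag).
case: (reachP ag) => [ga | [c ac cg]]; first by rewrite ga in ng *; rewrite (reach_normal ng af).
have [inv_b inv_c] := (R_inv ab inv_a, R_inv ac inv_a).
have [d bd cd] := R_local_confluent ab ac.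
have [e de ne] := reach_normal_exists (reach_inv bd inv_b).
rewrite (IH b f e _ inv_b bf nf (rt_trans bd de) ne); last exact: leq_trans (R_weight ab) wa.
by rewrite (IH c g e _ inv_c cg ng (rt_trans cd de) ne) // (leq_trans (R_weight ac) wa).
Qed.

End NormalForms.

Section SeqSplitting.

Variable T : Type.
Implicit Types (p q r s : seq T) (u v w y : T).

Lemma nth_cat3 x0 p q u v w :
  [/\ nth x0 (p ++ [:: u, v, w & q]) (size p) = u,
      nth x0 (p ++ [:: u, v, w & q]) (size p).+1 = v
    & nth x0 (p ++ [:: u, v, w & q]) (size p).+2 = w].
Proof. by elim: p. Qed.

Lemma set_nth_cat3 x0 p q u v w y :
  set_nth x0 (p ++ [:: u, v, w & q]) (size p).+1 y = p ++ [:: u, y, w & q].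
Proof. by elim: p => //= a p ->. Qed.

Lemma cat_take_drop_nth3 x0 s n : (0 < n)%N -> (n.+1 < size s)%N ->
  s = take n.-1 s ++ [:: nth x0 s n.-1, nth x0 s n, nth x0 s n.+1 & drop n.+2 s].
Proof.
case: n => // n _ lt_n; rewrite -{1}(cat_take_drop n s) (drop_nth x0)
  ?(drop_nth x0 (_ : n.+1 < _)%N) ?(drop_nth x0 (_ : n.+2 < _)%N) //; lia.
Qed.

Lemma cat_eq_cat_leq_size p1 p2 s1 s2 :
  p1 ++ s1 = p2 ++ s2 -> (size p1 <= size p2)%N -> exists2 r, p2 = p1 ++ r & s1 = r ++ s2.
Proof.
elim: p1 p2 => [|a p1 IH] [|b p2] //=; first by move=> ->; exists [::].
  by move=> ->; exists (b :: p2).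
by case=> <- /IH IHp /IHp[r -> ->]; exists r.
Qed.

End SeqSplitting.

Section Labeling.

Context {d : Order.disp_t} {P : finPOrderType d} {dL : Order.disp_t} {L : porderType dL}.
Variables (lam : P -> P -> L) (bot : P).
Hypothesis bot_min : forall x : P, bot <= x.
Hypothesis lam_ER : ER_labeling lam.
Hypothesis lam_switching : switching lam bot.
Hypothesis lam_distinct_words : distinct_ascent_free_words lam.

Implicit Types (a b t u v w x y z : P) (c p q r s : seq P).

Local Notation labels := (@labels d P dL L lam).

Lemma covers_lt x y : covers x y -> x < y.
Proof. by case/andP. Qed.

Lemma maxchain_sorted x y c : is_maxchain x y c -> sorted covers c.
Proof. by case: c => //= a s /and3P[]. Qed.

Lemma labels_cat p u s : labels (p ++ u :: s) = labels (rcons p u) ++ labels (u :: s).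
Proof. by case: p => [|a p] //=; rewrite -cats1 !pairmap_cat /= -catA. Qed.

Lemma ascent_free_cons2 (l1 l2 : L) (ls : seq L) :
  ascent_free [:: l1, l2 & ls] = ~~ (l1 < l2) && ascent_free (l2 :: ls).
Proof. by []. Qed.

Lemma ascent_free_behead (l : L) (ls : seq L) : ascent_free (l :: ls) -> ascent_free ls.
Proof. by case: ls => // l2 ls; rewrite ascent_free_cons2 => /andP[]. Qed.

Lemma ascent_free_cat_ascent (ls1 : seq L) (l1 l2 : L) (ls2 : seq L) :
  l1 < l2 -> ~~ ascent_free (ls1 ++ [:: l1, l2 & ls2]).
Proof.
move=> lt12; elim: ls1 => [|l ls1 IH]; first by rewrite ascent_free_cons2 lt12.
by apply: contra IH; rewrite cat_cons => /ascent_free_behead.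
Qed.

(** * Switching in rank two *)

Definition ascent (u v w : P) : bool :=
  [&& covers u v, covers v w & lam u v < lam v w].

Definition switchb (u v w y : P) : bool :=
  [&& covers u y, covers y w, lam u y == lam v w & lam y w == lam u v].

(* The same choice as in [U], so that [U] performs exactly this switch; the default [v] is
   only reached off ascents. *)
Definition swap (u v w : P) : P := odflt v [pick y | switchb u v w y].

Lemma switch_exists u v w : ascent u v w ->
  exists y, [/\ covers u y, covers y w, lam u y = lam v w & lam y w = lam u v].
Proof.
case/and3P=> cuv cvw lt_uvw.
(* any saturated chain from [bot] to [u] will do, and the ER property provides one *)
have [[|b s] [[//= /and3P[/eqP-> s_path /eqP s_last] _] _]] := lam_ER (bot_min u).
have def_s : bot :: s ++ [:: v; w] = belast bot s ++ [:: u, v, w & [::]].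
  by rewrite -cat_cons lastI s_last cat_rcons.
have s_path' : path covers bot (s ++ [:: v; w]) by rewrite cat_path s_path s_last /= cuv cvw.
have := lam_switching s_path' (i := (size s).+1) isT; rewrite size_cat addn2 => /(_ (ltnSn _)).
rewrite def_s -(size_belast bot s) /=; have [-> -> ->] := nth_cat3 bot (belast bot s) [::] u v w.
by case/(_ lt_uvw)=> y [? _]; exists y.
Qed.

Lemma pick_swap u v w : ascent u v w -> [pick y | switchb u v w y] = Some (swap u v w).
Proof.
rewrite /swap => /switch_exists[y [cuy cyw luy lyw]]; case: pickP => //= /(_ y).
by rewrite /switchb cuy cyw luy lyw !eqxx.
Qed.

Lemma swapP u v w : ascent u v w ->
  [/\ covers u (swap u v w), covers (swap u v w) w,
      lam u (swap u v w) = lam v w & lam (swap u v w) w = lam u v].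
Proof. by move/pick_swap; case: pickP => // y /and4P[? ? /eqP ? /eqP ?] [<-]. Qed.

Lemma ascent_unique a x1 x2 w : ascent a x1 w -> ascent a x2 w -> x1 = x2.
Proof.
move=> asc1 asc2; have /and3P[cax1 cx1w _] := asc1.
have [c [_ c_unique]] := lam_ER (ltW (lt_trans (covers_lt cax1) (covers_lt cx1w))).
have incr x : ascent a x w -> is_maxchain a w [:: a; x; w] /\ increasing (labels [:: a; x; w]).
  by case/and3P=> cax cxw lt; rewrite /is_maxchain /increasing /= !eqxx cax cxw lt.
by have := etrans (esym (c_unique _ (incr _ asc1))) (c_unique _ (incr _ asc2)) => -[].
Qed.

Lemma braid_ascents u v w t (y := swap u v w) (w' := swap v w t) :
  ascent u v w -> ascent v w t ->
  [/\ ascent y w t, ascent u y (swap y w t), ascent u v w' & ascent (swap u v w') w' t].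
Proof.
move=> a1 a2; have /and3P[cuv cvw l1] := a1; have /and3P[_ cwt l2] := a2.
have [cuy cyw luy lyw] := swapP a1; have [cvw' cw't lvw' lw't] := swapP a2.
have a3 : ascent y w t by rewrite /ascent cyw cwt lyw (lt_trans l1 l2).
have a5 : ascent u v w' by rewrite /ascent cuv cvw' lvw' (lt_trans l1 l2).
split=> //.
  by have [cyw1 _ lyw1 _] := swapP a3; rewrite /ascent cuy cyw1 luy lyw1.
by have [_ cv'w' _ lv'w'] := swapP a5; rewrite /ascent cv'w' cw't lv'w' lw't.
Qed.

Lemma swap_braid u v w t (y := swap u v w) (w' := swap v w t) :
  ascent u v w -> ascent v w t ->
  swap u y (swap y w t) = swap u v w' /\ swap y w t = swap (swap u v w') w' t.
Proof.
move=> a1 a2; have [a3 a4 a5 a6] := braid_ascents a1 a2.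
have /and3P[_ _ l1] := a1; have /and3P[_ _ l2] := a2.
have [_ _ luy lyw] := swapP a1; have [_ cw1t lyw1 lw1t] := swapP a3.
have [cuy2 cy2w1 luy2 ly2w1] := swapP a4; have [_ _ lvw' lw't] := swapP a2.
have [cuv' _ luv' lv'w'] := swapP a5; have [cv'w'' cw''t lv'w'' lw''t] := swapP a6.
have word_cba : ascent_free [:: lam w t; lam v w; lam u v].
  by rewrite !ascent_free_cons2 (lt_gtF l1) (lt_gtF l2).
have := lam_distinct_words (x := u) (y := t)
  (c1 := [:: u; swap u y (swap y w t); swap y w t; t])
  (c2 := [:: u; swap u v w'; swap (swap u v w') w' t; t]).
rewrite /is_maxchain /= !eqxx cuy2 cy2w1 cw1t cuv' cv'w'' cw''t.
rewrite luy2 lyw1 ly2w1 luy lw1t lyw luv' lvw' lv'w'' lw't lw''t lv'w'.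
by move=> /(_ isT isT word_cba word_cba erefl) [-> ->].
Qed.

(** * The rewriting system of exchanges *)

Inductive exchange : seq P -> seq P -> Prop :=
  ExchangeI p q u v w : ascent u v w ->
    exchange (p ++ [:: u, v, w & q]) (p ++ [:: u, swap u v w, w & q]).

Local Notation exchanges := (clos_refl_trans _ exchange).

Lemma exchange_catl r c c' : exchange c c' -> exchange (r ++ c) (r ++ c').
Proof. by case=> p q u v w asc; rewrite !catA; constructor. Qed.

Lemma exchanges_catl r c c' : exchanges c c' -> exchanges (r ++ c) (r ++ c').
Proof.
elim=> [a b /(exchange_catl r)/rt_step // | a | a b e _ IH1 _ IH2]; first exact: rt_refl.
exact: rt_trans IH1 IH2.
Qed.

Lemma exchange_sorted c c' : exchange c c' -> sorted covers c -> sorted covers c'.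
Proof.
case=> p q u v w /swapP[cuy cyw _ _].
by rewrite !sorted_cat_cons /= => /and4P[-> _ _ ->]; rewrite cuy cyw.
Qed.

Lemma exchange_maxchain x y c c' : exchange c c' -> is_maxchain x y c -> is_maxchain x y c'.
Proof.
case=> p q u v w /swapP[cuy cyw _ _].
case: p => [|a p] /=; last rewrite !cat_path !last_cat /=.
  by case/and3P=> -> /and3P[_ _ ->] ->; rewrite cuy cyw.
by case/and3P=> -> /andP[-> /and4P[-> _ _ ->]] ->; rewrite cuy cyw.
Qed.

Lemma exchanges_maxchain x y c c' : exchanges c c' -> is_maxchain x y c -> is_maxchain x y c'.
Proof. exact: (@reach_inv _ exchange (is_maxchain x y) (@exchange_maxchain x y)). Qed.

Definition label_height (l : L) : nat := #|[set e : P * P | lam e.1 e.2 < l]|.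

(* The letter at position [i] is counted [i + 1] times, so turning an ascent [l1 l2] into
   [l2 l1] lowers the weight. *)
Fixpoint label_weight (ls : seq L) : nat :=
  if ls is _ :: ls' then sumn (map label_height ls) + label_weight ls' else 0.

Lemma label_height_lt u v l : lam u v < l -> (label_height (lam u v) < label_height l)%N.
Proof.
move=> lt_l; apply: proper_card; apply/properP; split.
  by apply/subsetP => e; rewrite !inE => /lt_trans; apply.
by exists (u, v); rewrite !inE /= ?lt_l ?ltxx.
Qed.

Lemma label_weight_swap ls1 (l1 l2 : L) ls2 : (label_height l1 < label_height l2)%N ->
  (label_weight (ls1 ++ [:: l2, l1 & ls2]) < label_weight (ls1 ++ [:: l1, l2 & ls2]))%N.
Proof.
by move=> lt12; elim: ls1 => [|l ls1 IH] /=; rewrite ?map_cat ?sumn_cat /=; lia.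
Qed.

Lemma exchange_weight c c' : exchange c c' ->
  (label_weight (labels c') < label_weight (labels c))%N.
Proof.
case=> p q u v w asc; have /and3P[_ _ lt] := asc; have [_ _ luy lyw] := swapP asc.
by rewrite !labels_cat /= luy lyw; apply/label_weight_swap/label_height_lt.
Qed.

Lemma ascent_free_irreducible c c' : ascent_free (labels c) -> ~ exchange c c'.
Proof.
move=> + ex; case: ex => p q u v w /and3P[_ _ lt].
by rewrite labels_cat /= (negbTE (ascent_free_cat_ascent _ _ lt)).
Qed.

Lemma exchange_of_ascent c : sorted covers c -> ~~ ascent_free (labels c) ->
  exists c', exchange c c'.
Proof.
elim: c => [|a [|b [|e s]] IH] // sc; rewrite [labels _]/= ascent_free_cons2 negb_and negbK.
case/orP=> [lt | /IH[|c' /(exchange_catl [:: a]) ex]]; last by exists ([:: a] ++ c').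
- exists [:: a, swap a b e, e & s]; apply: (@ExchangeI [::]).
  by case/and3P: sc => cab cbe _; rewrite /ascent cab cbe lt.
- exact: path_sorted sc.
Qed.

Lemma exchange_confluent_ordered p1 q1 u1 v1 w1 p2 q2 u2 v2 w2 :
  ascent u1 v1 w1 -> ascent u2 v2 w2 ->
  p1 ++ [:: u1, v1, w1 & q1] = p2 ++ [:: u2, v2, w2 & q2] -> (size p1 <= size p2)%N ->
  exists2 e, exchanges (p1 ++ [:: u1, swap u1 v1 w1, w1 & q1]) e
           & exchanges (p2 ++ [:: u2, swap u2 v2 w2, w2 & q2]) e.
Proof.
move=> a1 a2 /cat_eq_cat_leq_size le /le[r -> {le}].
case: r => [|b [|b' r]] /=.
- move=> [-> -> -> ->]; rewrite cats0.
  by exists (p1 ++ [:: u2, swap u2 v2 w2, w2 & q2]); apply: rt_refl.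
- move=> [<- eu ev ->]; subst u2 v2.
  have [a3 a4 a5 a6] := braid_ascents a1 a2; have [e1 e2] := swap_braid a1 a2.
  exists (p1 ++ [:: u1, swap u1 v1 (swap v1 w1 w2),
                   swap (swap u1 v1 (swap v1 w1 w2)) (swap v1 w1 w2) w2, w2 & q2]).
    have ex3 := ExchangeI (rcons p1 u1) q2 a3; rewrite !cat_rcons in ex3.
    by rewrite -e2 -e1; exact: rt_trans (rt_step ex3) (rt_step (ExchangeI p1 _ a4)).
  have ex6 := ExchangeI (rcons p1 u1) q2 a6; rewrite !cat_rcons in ex6.
  by rewrite -catA /=; exact: rt_trans (rt_step (ExchangeI p1 _ a5)) (rt_step ex6).
- move=> [<- <- def_q1].
  have [q1' def_q1'] : exists q1', r ++ [:: u2, swap u2 v2 w2, w2 & q2] = w1 :: q1'.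
    by case: r def_q1 => [|a r] [-> _]; eexists.
  exists (p1 ++ [:: u1, swap u1 v1 w1 & r ++ [:: u2, swap u2 v2 w2, w2 & q2]]).
    apply: rt_step; rewrite def_q1.
    by have := ExchangeI (p1 ++ [:: u1, swap u1 v1 w1 & r]) q2 a2; rewrite -!catA.
  by apply: rt_step; rewrite -catA /= def_q1'; exact: ExchangeI.
Qed.

Lemma exchange_local_confluent c c1 c2 : exchange c c1 -> exchange c c2 ->
  exists2 e, exchanges c1 e & exchanges c2 e.
Proof.
case=> p1 q1 u1 v1 w1 a1 ex2; move E: (p1 ++ _) ex2 => c0 ex2.
case: ex2 E => p2 q2 u2 v2 w2 a2 E.
have [le | /ltnW le] := leqP (size p1) (size p2).
  exact: exchange_confluent_ordered a1 a2 E le.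
by have [e ? ?] := exchange_confluent_ordered a2 a1 (esym E) le; exists e.
Qed.

Definition normal_form c f := exchanges c f /\ ascent_free (labels f).

Lemma normal_form_exists c : sorted covers c -> exists f, normal_form c f.
Proof.
case/(reach_normal_exists exchange_sorted exchange_weight exchange_of_ascent)=> f cf nf.
by exists f.
Qed.

Lemma normal_form_unique c f g : sorted covers c -> normal_form c f -> normal_form c g -> f = g.
Proof.
move=> sc [cf nf] [cg ng].
exact: (reach_normal_unique exchange_sorted exchange_weight ascent_free_irreducible
          exchange_of_ascent exchange_local_confluent sc cf nf cg ng).
Qed.

Lemma normal_form_exchanges c c' f : sorted covers c -> exchanges c c' ->
  normal_form c f -> normal_form c' f.
Proof.
move=> sc cc' nf_c; have [g [c'g ng]] := normal_form_exists (reach_inv exchange_sorted cc' sc).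
by rewrite (normal_form_unique sc nf_c (conj (rt_trans cc' c'g) ng)).
Qed.

(** * The quadratic exchanges [U i] *)

Lemma U_at p q u v w : covers u v -> covers v w ->
  U lam (size p).+1 (p ++ [:: u, v, w & q]) =
  if lam u v < lam v w then p ++ [:: u, swap u v w, w & q] else p ++ [:: u, v, w & q].
Proof.
move=> cuv cvw.
have [a [s def_c]] : exists a s, p ++ [:: u, v, w & q] = a :: s.
  by case: p => [|b p]; do 2!eexists.
rewrite def_c /U -def_c /=; have [-> -> ->] := nth_cat3 a p q u v w.
have -> : (size p).+2 < size (p ++ [:: u, v, w & q]) by rewrite ltEnat size_cat /=; lia.
rewrite /=; case: (boolP (lam u v < lam v w)) => // lt.
have asc : ascent u v w by rewrite /ascent cuv cvw lt.
by move: (pick_swap asc); rewrite /switchb => ->; rewrite set_nth_cat3.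
Qed.

Lemma U_ascent p q u v w : ascent u v w ->
  U lam (size p).+1 (p ++ [:: u, v, w & q]) = p ++ [:: u, swap u v w, w & q].
Proof. by case/and3P=> cuv cvw lt; rewrite U_at // lt. Qed.

Lemma U_ascent_next p q u v w t : ascent v w t ->
  U lam (size p).+2 (p ++ [:: u, v, w, t & q]) = p ++ [:: u, v, swap v w t, t & q].
Proof. by move/(U_ascent (rcons p u) q); rewrite size_rcons !cat_rcons. Qed.

Lemma U_out i c : ~~ [&& 0 < i & i.+1 < size c] -> U lam i c = c.
Proof.
case: c => // a s out; rewrite /U ifF //.
by apply: contraNF out => /and3P[-> ->].
Qed.

Lemma U_cases i c : sorted covers c -> U lam i c = c \/ exchange c (U lam i c).
Proof.
case: c => [|a s] sc; first by left.
have [/andP[i_gt0 i_lt] | out] := boolP [&& 0 < i & i.+1 < size (a :: s)]; last first.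
  by left; exact: U_out.
have def_c := cat_take_drop_nth3 a i_gt0 i_lt.
have size_p : size (take i.-1 (a :: s)) = i.-1 by rewrite size_takel //; lia.
move: (take _ _) (nth a _ i.-1) (nth a _ i) (nth a _ i.+1) (drop _ _) size_p sc def_c.
move=> p u v w q size_p + def_c; rewrite def_c -(prednK i_gt0) -size_p.
rewrite sorted_cat_cons /= => /and4P[_ cuv cvw _]; rewrite U_at //.
by case: ifP => lt; [right; apply: ExchangeI; rewrite /ascent cuv cvw lt | left].
Qed.

Lemma exchange_U c c' : exchange c c' -> exists i, U lam i c = c'.
Proof. by case=> p q u v w asc; exists (size p).+1; rewrite U_ascent. Qed.

Theorem lam_braid_relation : braid_relation lam.
Proof.
move=> x y c mc i i_gt0 i_lt /=.
have def_c := cat_take_drop_nth3 x i_gt0 (ltnW i_lt); rewrite (drop_nth x i_lt) in def_c.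
have size_p : size (take i.-1 c) = i.-1 by rewrite size_takel //; lia.
move: (take _ _) (nth x c i.-1) (nth x c i) (nth x c i.+1) (nth x c i.+2) (drop _ _) size_p def_c.
move=> p u v w t q size_p def_c; subst c; rewrite -(prednK i_gt0) -size_p => l1 l2.
move: mc => /maxchain_sorted; rewrite sorted_cat_cons /= => /and5P[_ cuv cvw cwt _].
have a1 : ascent u v w by rewrite /ascent cuv cvw l1.
have a2 : ascent v w t by rewrite /ascent cvw cwt l2.
have [a3 a4 a5 a6] := braid_ascents a1 a2; have [e1 e2] := swap_braid a1 a2.
rewrite U_ascent // U_ascent_next // U_ascent // U_ascent_next // U_ascent // U_ascent_next //.
by rewrite e1 e2.
Qed.

Lemma exchanges_lam_equiv x y c c' : exchanges c c' -> is_maxchain x y c ->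
  lam_equiv lam x y c c'.
Proof.
elim=> [a b ab ma | a _ | a b e ab IH1 _ IH2 ma].
- by apply: rst_step; split; [|exact: exchange_maxchain ab ma|exact: exchange_U].
- exact: rst_refl.
- exact: rst_trans (IH1 ma) (IH2 (exchanges_maxchain ab ma)).
Qed.

Lemma lam_equiv_maxchain x y c1 c2 : lam_equiv lam x y c1 c2 ->
  is_maxchain x y c1 <-> is_maxchain x y c2.
Proof. by elim=> [a b [] | a | a b _ | a b e _ IH1 _ IH2]; tauto. Qed.

Lemma lam_equiv_normal_form x y c1 c2 : lam_equiv lam x y c1 c2 -> is_maxchain x y c1 ->
  exists f, normal_form c1 f /\ normal_form c2 f.
Proof.
elim=> [a _ [ma _ [i <-]] _ | a ma | a b ab IH mb | a b e ab IH1 _ IH2 ma].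
- have sa := maxchain_sorted ma; have [f nf] := normal_form_exists sa.
  exists f; split=> //; apply: (normal_form_exchanges sa _ nf).
  by case: (U_cases i sa) => [-> | /rt_step //]; exact: rt_refl.
- by have [f nf] := normal_form_exists (maxchain_sorted ma); exists f.
- by have [f []] := IH ((lam_equiv_maxchain ab).2 mb); exists f.
- have mb := (lam_equiv_maxchain ab).1 ma.
  have [f [af bf]] := IH1 ma; have [g [bg eg]] := IH2 mb.
  by exists g; rewrite (normal_form_unique (maxchain_sorted mb) bf bg) in af.
Qed.

(** * Cancellation *)

(* The first label of [a :: x :: s] travels right by exchanges until it stops creating an
   ascent. *)
Lemma normal_form_cons a x s : sorted covers [:: a, x & s] -> ascent_free (labels (x :: s)) ->
  exists z r, normal_form [:: a, x & s] [:: a, z & r] /\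
    (z = x /\ r = s \/ exists w s',
       [/\ s = w :: s', ascent a x w, z = swap a x w & normal_form [:: z, w & s'] (z :: r)]).
Proof.
elim: s a x => [|w s IH] a x sc af.
  by exists x, [::]; split; [split; [exact: rt_refl|] | left].
have /and3P[cax cxw _] : [&& covers a x, covers x w & path covers w s] := sc.
have [lt | nlt] := boolP (lam a x < lam x w); last first.
  exists x, (w :: s); split; [split; first exact: rt_refl | by left].
  by rewrite [labels _]/= ascent_free_cons2 nlt.
have asc : ascent a x w by rewrite /ascent cax cxw lt.
have [cay cyw lay lyw] := swapP asc.
have [|z [r [[yz afz] H]]] := IH (swap a x w) w _ (ascent_free_behead af).
  by move: sc => /= /and3P[_ _ ->]; rewrite cyw.
exists (swap a x w), (z :: r); split; last by right; exists w, s.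
split; first exact: rt_trans (rt_step (@ExchangeI [::] s a x w asc)) (exchanges_catl [:: a] yz).
rewrite [labels _]/= ascent_free_cons2 lay; apply/andP; split=> //.
case: H => [[-> _] | [w1 [s1 [def_s asc' -> _]]]]; first by rewrite lyw (lt_gtF lt).
have [_ _ -> _] := swapP asc'.
by move: af; rewrite def_s [labels _]/= ascent_free_cons2 => /andP[].
Qed.

Lemma normal_form_cons_inj s1 a x1 x2 s2 f :
  sorted covers [:: a, x1 & s1] -> sorted covers [:: a, x2 & s2] ->
  ascent_free (labels (x1 :: s1)) -> ascent_free (labels (x2 :: s2)) ->
  lam a x1 = lam a x2 -> normal_form [:: a, x1 & s1] f -> normal_form [:: a, x2 & s2] f ->
  x1 = x2 /\ s1 = s2.
Proof.
elim: s1 a x1 x2 s2 f => [|w1 s1 IH] a x1 x2 s2 f sc1 sc2 af1 af2 l12 nf1 nf2.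
all: have [z [r [nz1 H1]]] := normal_form_cons sc1 af1.
all: have [z2 [r2 [nz2 H2]]] := normal_form_cons sc2 af2.
all: have [ez er] : z2 = z /\ r2 = r
  by move: (normal_form_unique sc1 nf1 nz1) (normal_form_unique sc2 nf2 nz2) => -> [-> ->].
all: subst z2 r2.
all: have label_up x s : (exists w s', [/\ s = w :: s', ascent a x w, z = swap a x w
                                          & normal_form [:: z, w & s'] (z :: r)]) ->
                         lam a x < lam a z
  by case=> w [s' [_ asc -> _]]; have [_ _ -> _] := swapP asc; case/and3P: asc.
- case: H1 => [[ez1 er1] | [? [? [//]]]].
  case: H2 => [[ez2 er2] | /label_up]; first by subst.
  by rewrite ez1 l12 ltxx.
- case: H1 => [[ez1 er1] | sw1]; case: H2 => [[ez2 er2] | sw2].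
  + by subst.
  + by move: (label_up _ _ sw2); rewrite ez1 l12 ltxx.
  + by move: (label_up _ _ sw1); rewrite ez2 -l12 ltxx.
  case: sw1 sw2 => [w [s' [[<- <-] asc1 ez1 nzw1]]] [w' [s'' [def_s2 asc2 ez2 nzw2]]].
  subst s2; have [_ czw1 _ lzw1] := swapP asc1; have [_ czw' _ lzw'] := swapP asc2.
  rewrite -ez1 in czw1 lzw1; rewrite -ez2 in czw' lzw'.
  have sz1 : sorted covers [:: z, w1 & s1] by move: sc1 => /= /and3P[_ _ ->]; rewrite czw1.
  have sz2 : sorted covers [:: z, w' & s''] by move: sc2 => /= /and3P[_ _ ->]; rewrite czw'.
  have [ew es] := IH z w1 w' s'' (z :: r) sz1 sz2 (ascent_free_behead af1)
    (ascent_free_behead af2) (etrans lzw1 (etrans l12 (esym lzw'))) nzw1 nzw2.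
  by subst w' s''; split=> //; exact: ascent_unique asc1 asc2.
Qed.

Lemma normal_form_catl_inj pre x s1 s2 f :
  sorted covers (pre ++ x :: s1) -> sorted covers (pre ++ x :: s2) ->
  ascent_free (labels (x :: s1)) -> ascent_free (labels (x :: s2)) ->
  normal_form (pre ++ x :: s1) f -> normal_form (pre ++ x :: s2) f -> s1 = s2.
Proof.
elim/last_ind: pre x s1 s2 f => [|pre a IH] x s1 s2 f sc1 sc2 af1 af2 nf1 nf2.
  move: (normal_form_unique sc1 nf1 (conj rt_refl af1)).
  by rewrite (normal_form_unique sc2 nf2 (conj rt_refl af2)) => -[].
rewrite !cat_rcons in sc1 sc2 nf1 nf2.
have suffix_sorted s : sorted covers (pre ++ a :: s) -> sorted covers (a :: s).
  by rewrite sorted_cat_cons => /andP[].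
have [z1 [r1 [nz1 _]]] := normal_form_cons (suffix_sorted _ sc1) af1.
have [z2 [r2 [nz2 _]]] := normal_form_cons (suffix_sorted _ sc2) af2.
have ex1 := exchanges_catl pre nz1.1; have ex2 := exchanges_catl pre nz2.1.
have [ez er] : z1 = z2 /\ r1 = r2.
  by case: (IH a (z1 :: r1) (z2 :: r2) f (reach_inv exchange_sorted ex1 sc1)
    (reach_inv exchange_sorted ex2 sc2) nz1.2 nz2.2
    (normal_form_exchanges sc1 ex1 nf1) (normal_form_exchanges sc2 ex2 nf2)) => -> ->.
subst z2 r2.
exact: (normal_form_cons_inj (suffix_sorted _ sc1) (suffix_sorted _ sc2) af1 af2 erefl nz1 nz2).2.
Qed.

Lemma maxchain_cat z x y c c' : is_maxchain z x c -> is_maxchain x y c' ->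
  is_maxchain z y (c ++ behead c').
Proof.
case: c => // a s /and3P[/eqP-> sp /eqP sl]; case: c' => // b s' /and3P[/eqP-> sp' /eqP sl'].
by rewrite /is_maxchain /= eqxx cat_path sp sl sp' last_cat sl sl' eqxx.
Qed.

Theorem lam_cancellative : cancellative lam.
Proof.
move=> z x y _ _ [//|z0 s] [//|x1 s1] [//|x2 s2] mc m1 m2.
have /and3P[_ _ /eqP s_last] := mc.
have [ex1 ex2] : x1 = x /\ x2 = x by case/and3P: m1 => /eqP -> _ _; case/and3P: m2 => /eqP.
subst x1 x2; set pre := belast z0 s.
have def_c r : (z0 :: s) ++ behead (x :: r) = pre ++ x :: r.
  by rewrite /= -cat_cons lastI s_last cat_rcons.
have mz1 := maxchain_cat mc m1; have mz2 := maxchain_cat mc m2.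
rewrite !def_c in mz1 mz2 * => /lam_equiv_normal_form /(_ mz1) [f [nf1 nf2]].
have sz1 := maxchain_sorted mz1; have sz2 := maxchain_sorted mz2.
have [[|x1 t1] nd1] := normal_form_exists (maxchain_sorted m1).
  by have := exchanges_maxchain nd1.1 m1.
have [[|x2 t2] nd2] := normal_form_exists (maxchain_sorted m2).
  by have := exchanges_maxchain nd2.1 m2.
have /and3P[/eqP ex1 _ _] := exchanges_maxchain nd1.1 m1.
have /and3P[/eqP ex2 _ _] := exchanges_maxchain nd2.1 m2.
subst x1 x2.
have e1 := exchanges_catl pre nd1.1; have e2 := exchanges_catl pre nd2.1.
have et : t1 = t2 := normal_form_catl_inj (reach_inv exchange_sorted e1 sz1)
  (reach_inv exchange_sorted e2 sz2) nd1.2 nd2.2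
  (normal_form_exchanges sz1 e1 nf1) (normal_form_exchanges sz2 e2 nf2).
rewrite et in nd1.
exact: rst_trans (exchanges_lam_equiv nd1.1 m1) (rst_sym (exchanges_lam_equiv nd2.1 m2)).
Qed.

End Labeling.

Theorem theorem3p22 (d : Order.disp_t) (P : finPOrderType d)
    (dL : Order.disp_t) (L : porderType dL) (lam : P -> P -> L) (bot : P) :
  (forall x : P, bot <= x) ->
  @graded d P ->
  ER_labeling lam ->
  switching lam bot ->
  distinct_ascent_free_words lam ->
  [/\ switching lam bot, braid_relation lam & cancellative lam].
Proof.
move=> bot_min _ lam_ER lam_switching lam_daf; split=> //.
  exact: lam_braid_relation bot_min lam_ER lam_switching lam_daf.
exact: lam_cancellative bot_min lam_ER lam_switching lam_daf.
Qed.
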